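(* Let $S$ be a reflective numerical semigroup with $\mathrm{g}(S)=g\ge1$ and $\mathrm{m}(S)=a$, and let $r\in\{1,\dots,a-1\}$ satisfy $g\equiv r\pmod a$. Then the minimal generating set $A$ of $S$ is \[ A=\begin{cases} \{a\}\cup\big(\{g+1,\dots,g+(a-1)\}\setminus\{g+(a-r)\}\big) & \text{if } g\not\equiv -1\pmod a,\\ \{a,\ 2g+1\}\cup\{g+2,\dots,g+(a-1)\} & \text{if } g\equiv -1\pmod a.\end{cases}\] Consequently the embedding dimension of $S$ is $a-1$ if $g\not\equiv-1\pmod a$ and $a$ if $g\equiv -1\pmod a$.
   Context: A numerical semigroup is a submonoid $S$ of $(\mathbb{N}_0,+)$ with finite complement. Its set of gaps is $\mathrm{H}(S)=\mathbb{N}_0\setminus S$, its genus is $\mathrm{g}(S)=\#\mathrm{H}(S)$, and its multiplicity $\mathrm{m}(S)$ is the smallest positive element of $S$. For $A\subseteq\mathbb{N}_0$, $\langle A\rangle$ denotes the set of finite $\mathbb{N}_0$-linear combinations of elements of $A$. The minimal generating set of $S$ is the unique inclusion-minimal $A$ with $S=\langle A\rangle$ (equivalently, a generating set in which no element is an $\mathbb{N}_0$-linear combination of the other elements); its cardinality is the embedding dimension of $S$. A numerical semigroup $S$ of genus $g\ge1$ is called reflective if for every $z\in\{0,1,\dots,g-1\}$ exactly one of $z$ and $z+g$ belongs to $S$. *)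

From mathcomp Require Import all_boot.
Set Implicit Arguments. Unset Strict Implicit. Unset Printing Implicit Defensive.

Definition card_is (A : pred nat) (k : nat) : Prop :=
  exists s : seq nat, [/\ uniq s, (forall x, (x \in s) = A x) & size s = k].

Definition numerical_semigroup (S : pred nat) : Prop :=
  [/\ S 0, (forall x y, S x -> S y -> S (x + y))
    & exists N, forall n, N <= n -> S n].

Definition gaps (S : pred nat) : pred nat := fun n => ~~ S n.

Definition genus_is (S : pred nat) (g : nat) : Prop := card_is (gaps S) g.

Definition multiplicity_is (S : pred nat) (a : nat) : Prop :=
  [/\ 0 < a, S a & forall x, 0 < x < a -> ~~ S x].

Inductive generated (A : pred nat) : nat -> Prop :=
  | gen0 : generated A 0
  | genS : forall a y, A a -> generated A y -> generated A (a + y).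

Definition generates (A : pred nat) (S : pred nat) : Prop :=
  forall x, S x <-> generated A x.

Definition minimal_generating_set (S A : pred nat) : Prop :=
  generates A S /\
  forall B : pred nat, (forall x, B x -> A x) -> generates B S ->
    forall x, A x -> B x.

Definition reflective (S : pred nat) (g : nat) : Prop :=
  1 <= g /\ forall z, z < g -> S z != S (z + g).

From mathcomp Require Import all_boot zify.
From Stdlib Require Import Classical.
Set Implicit Arguments. Unset Strict Implicit. Unset Printing Implicit Defensive.

(* Reflectivity pins S down completely.  Below g, S is closed under subtracting its own
   elements, so it consists of the multiples of a; on [g, 2g) it is the complement of
   g + aN; and S contains every n >= 2g, because choosing the gap among z and z + g for
   each z < g already exhausts the g gaps.  The minimal generating set of a numerical
   semigroup is its set of atoms, and reading them off this explicit description gives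
   a, the window (g, g + a) without g + a - r = a + (g - r), and 2g + 1 precisely when
   it is not (g + 1) + (g + a - r - 1), i.e. when r = a - 1. *)

Definition atom (S : pred nat) (x : nat) : Prop :=
  [/\ S x, 0 < x & forall s t, 0 < s -> 0 < t -> S s -> S t -> x <> s + t].

Lemma generated_add (A : pred nat) x y :
  generated A x -> generated A y -> generated A (x + y).
Proof. by elim=> // b z Ab _ IH Ay; rewrite -addnA; apply: genS => //; apply: IH. Qed.

Lemma card_is_eq (A B : pred nat) k : A =1 B -> card_is B k -> card_is A k.
Proof. by move=> eqAB [s [s_uniq s_B s_size]]; exists s; split=> // x; rewrite eqAB. Qed.

Lemma dvdn_eq_lt_double d m : d %| m -> 0 < m < 2 * d -> m = d.
Proof. by case/dvdnP=> k -> bounds; case: k bounds => [|[|k]] /=; lia. Qed.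

Section MonoidAtoms.
Variable S : pred nat.
Hypotheses (S0 : S 0) (S_add : forall x y, S x -> S y -> S (x + y)).

Lemma generated_in_monoid (A : pred nat) x : subpred A S -> generated A x -> S x.
Proof. by move=> sAS; elim=> // b z Ab _; apply: S_add; apply: sAS. Qed.

Lemma generated_of_atoms (A : pred nat) x :
  (forall y, atom S y -> A y) -> S x -> generated A x.
Proof.
move=> atomsA; elim/ltn_ind: x => x IH Sx; have [->|x_gt0] := posnP x; first exact: gen0.
have [x_atom | x_not_atom] := classic (atom S x).
  by rewrite -[x]addn0; apply: genS (gen0 _); apply: atomsA.
have [s [t [s_gt0 t_gt0 Ss St x_eq]]] : exists s t, [/\ 0 < s, 0 < t, S s, S t & x = s + t].
  apply: NNPP => no_split; apply: x_not_atom; split=> // s t s_gt0 t_gt0 Ss St x_eq.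
  by apply: no_split; exists s, t.
by rewrite x_eq; apply: generated_add; [apply: (IH s) | apply: (IH t)] => //; lia.
Qed.

Lemma atom_generated (A : pred nat) x :
  subpred A S -> generated A x -> atom S x -> A x.
Proof.
move=> sAS; elim=> [[_]|b z Ab Az IH [Sx x_gt0 x_atom]]; first by [].
have [b0 | b_gt0] := posnP b.
  by move: Sx x_gt0 x_atom; rewrite b0 add0n => Sz z_gt0 z_atom; apply: IH.
have [z0 | z_gt0] := posnP z; first by rewrite z0 addn0.
by case: (x_atom b z) => //; [apply: sAS | apply: generated_in_monoid Az].
Qed.

Lemma minimal_generating_setP (A : pred nat) :
  minimal_generating_set S A <-> forall x, A x <-> atom S x.
Proof.
split=> [[genA minA] x | A_atoms].
  have sAS : subpred A S by move=> y Ay; apply/genA; rewrite -[y]addn0; apply: genS (gen0 _).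
  have atomsA y : atom S y -> A y.
    by move=> y_atom; apply: atom_generated => //; apply/genA; case: y_atom.
  split=> [Ax|]; last exact: atomsA.
  apply: NNPP => x_not_atom.
  have genB : generates (fun y => A y && (y != x)) S.
    move=> y; split; last by apply: generated_in_monoid => z /andP[/sAS].
    apply: generated_of_atoms => z z_atom; rewrite atomsA //=.
    by apply: contraPneq x_not_atom => <-.
  have sBA : subpred (fun y => A y && (y != x)) A by move=> y /andP[].
  by have /andP[_] := minA _ sBA genB x Ax; rewrite eqxx.
have sAS : subpred A S by move=> y /A_atoms[].
split=> [x | B sBA genB x /A_atoms x_atom].
  by split; [apply: generated_of_atoms => y /A_atoms | apply: generated_in_monoid].
have sBS : subpred B S by move=> y /sBA /sAS.
have [Sx _ _] := x_atom.
by apply: (atom_generated sBS) x_atom; apply/genB.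
Qed.

End MonoidAtoms.

Definition reflective_atoms (g a r : nat) : pred nat := fun x =>
  [|| x == a, (g < x < g + a) && (x != g + a - r) | (r == a - 1) && (x == 2 * g + 1)].

Section Reflective.
Variables (S : pred nat) (g a : nat).
Hypotheses (S_ns : numerical_semigroup S) (S_genus : genus_is S g)
  (S_mult : multiplicity_is S a) (S_refl : reflective S g).

Let S_zero : S 0. Proof. by case: S_ns. Qed.
Let S_add x y : S x -> S y -> S (x + y). Proof. by case: S_ns => _ /(_ x y). Qed.
Let g_gt0 : 0 < g. Proof. by case: S_refl. Qed.

(* z |-> (z or z + g, whichever is a gap) injects [0, g) into the g gaps, so it is onto them. *)
Lemma reflective_ge_2g n : 2 * g <= n -> S n.
Proof.
case: S_genus => s [s_uniq s_gaps s_size] n_ge; apply/negPn/negP => n_gap.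
have [_ refl] := S_refl.
pose f z := if S z then z + g else z.
have f_inj : {in iota 0 g &, injective f}.
  by move=> z1 z2; rewrite !mem_iota /f; case: (S z1); case: (S z2); lia.
have f_gaps : {subset map f (iota 0 g) <= s}.
  move=> y /mapP[z]; rewrite mem_iota add0n => /andP[_ z_lt] ->.
  rewrite s_gaps /gaps /f; have := refl z z_lt.
  by case Sz: (S z) => //=; rewrite Sz.
have [_ f_onto] := uniq_min_size (etrans (map_inj_in_uniq f_inj) (iota_uniq 0 g)) f_gaps
  ltac:(by rewrite size_map size_iota s_size).
have : n \in s by rewrite s_gaps.
by rewrite -f_onto => /mapP[z]; rewrite mem_iota /f; case: (S z); lia.
Qed.

Lemma mul_mult_in k : S (k * a).
Proof. by have [_ Sa _] := S_mult; elim: k => [|k IH] //; rewrite mulSn; apply: S_add. Qed.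

(* x + g is a gap; were x - s one too, then x - s + g and hence x + g would lie in S. *)
Lemma reflective_sub_lt_g x s : x < g -> S x -> S s -> s <= x -> S (x - s).
Proof.
move=> x_lt Sx Ss s_le; have [_ refl] := S_refl; apply/negPn/negP => xs_gap.
have := refl (x - s) ltac:(lia); rewrite (negbTE xs_gap) /= => /negPn Sxsg.
have := refl x x_lt; rewrite Sx.
by have := S_add Sxsg Ss; rewrite (_ : x - s + g + s = x + g) ?subnK //; lia.
Qed.

Lemma reflective_lt_g n : n < g -> S n = (a %| n).
Proof.
have [a_gt0 Sa below_a] := S_mult.
elim/ltn_ind: n => n IH n_lt; apply/idP/idP; last by case/dvdnP=> k ->; apply: mul_mult_in.
move=> Sn; have [->|n_gt0] := posnP n; first exact: dvdn0.
have [n_lt_a | a_le] := ltnP n a; first by have := below_a n; rewrite n_gt0 n_lt_a Sn => /(_ isT).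
have := IH (n - a) ltac:(lia) ltac:(lia); rewrite reflective_sub_lt_g // => /esym dvd_na.
by rewrite -(subnK a_le) dvdn_add.
Qed.

Lemma reflective_lt_2g n : g <= n < 2 * g -> S n = ~~ (a %| n - g).
Proof.
move=> n_bounds; have [_ refl] := S_refl.
have := refl (n - g) ltac:(lia); rewrite subnK ?(reflective_lt_g (n := n - g)); [|lia..].
by case: (a %| n - g); case: (S n).
Qed.

Lemma reflective_window x : g < x < g + a -> S x.
Proof.
move=> x_bounds; have [x_ge | x_lt] := leqP (2 * g) x; first exact: reflective_ge_2g.
by rewrite reflective_lt_2g ?gtnNdvd; lia.
Qed.

Lemma mult_ndvd_genus : ~~ (a %| g).
Proof.
have [_ refl] := S_refl; have := refl 0 g_gt0; rewrite S_zero add0n.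
by apply: contraNN => /dvdnP[k ->]; apply: mul_mult_in.
Qed.

Lemma mult_gt1 : 1 < a.
Proof.
have [a_gt0 _ _] := S_mult; case: a a_gt0 mult_ndvd_genus => [|[|]] //.
by rewrite dvd1n.
Qed.

Lemma mult_le_genus1 : a <= g + 1.
Proof.
have [_ _ below_a] := S_mult; rewrite leqNgt; apply/negP => a_gt.
have := below_a (g + 1); rewrite reflective_window; last by have := mult_gt1; lia.
by move/(_ ltac:(lia)).
Qed.

Variable r : nat.
Hypothesis g_mod : g %% a = r.

Lemma residue_gt0 : 0 < r.
Proof. by rewrite lt0n -g_mod -/(a %| g) mult_ndvd_genus. Qed.

Lemma residue_lt : r < a.
Proof. by rewrite -g_mod ltn_mod; have := mult_gt1; lia. Qed.

Lemma residue_le_genus : r <= g.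
Proof. by rewrite -g_mod leq_mod. Qed.

Lemma residue_small : g < a -> r = g.
Proof. by move=> g_lt; rewrite -g_mod modn_small. Qed.

Lemma dvdn_genus_subr : a %| g - r.
Proof. by apply/dvdnP; exists (g %/ a); rewrite -g_mod {1}(divn_eq g a) addnK. Qed.

Lemma dvdn_genusD y : (a %| g + y) = (a %| r + y).
Proof.
by rewrite -(subnK residue_le_genus) -addnA dvdn_addr ?dvdn_genus_subr // addnC.
Qed.

Lemma residue_last : ((g + 1) %% a == 0) = (r == a - 1).
Proof.
have := residue_lt; rewrite -/(a %| g + 1) dvdn_genusD => r_lt.
apply/idP/eqP => [dvd_r1 | ->]; last by rewrite subnK ?dvdnn //; lia.
by have := dvdn_eq_lt_double dvd_r1; lia.
Qed.

Lemma reflective_pos_cases s : S s -> 0 < s -> [/\ a %| s, a <= s & s < g] \/ g < s.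
Proof.
move=> Ss s_gt0; have [s_lt | s_ge] := ltnP s g; last first.
  right; rewrite ltn_neqAle s_ge andbT; apply: contraTneq Ss => <-.
  by rewrite reflective_lt_2g ?subnn ?dvdn0 //; lia.
have dvd_s : a %| s by rewrite -reflective_lt_g.
by left; split=> //; apply: dvdn_leq.
Qed.

Lemma atom_mult : atom S a.
Proof.
have [a_gt0 Sa below_a] := S_mult; split=> // s t s_gt0 t_gt0 Ss _ a_eq.
by have := below_a s; rewrite s_gt0 Ss; move/(_ ltac:(lia)).
Qed.

Lemma atom_window x : g < x < g + a -> x != g + a - r -> atom S x.
Proof.
move=> x_bounds x_neq; split; [exact: reflective_window | lia |].
move=> s t s_gt0 t_gt0 Ss St x_eq; have := mult_le_genus1.
case: (reflective_pos_cases Ss s_gt0) => [[dvd_s a_le_s _]|]; last first.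
  by case: (reflective_pos_cases St t_gt0) => [[]|]; lia.
case: (reflective_pos_cases St t_gt0) => [[dvd_t _ _]|]; last by lia.
have := dvdn_add dvd_s dvd_t; rewrite -x_eq -(subnKC (ltnW (proj1 (andP x_bounds)))).
rewrite dvdn_genusD => /dvdn_eq_lt_double; have := residue_lt; lia.
Qed.

Lemma atom_last : r = a - 1 -> atom S (2 * g + 1).
Proof.
move=> r_last; split; [by apply: reflective_ge_2g; lia | lia |].
have dvd_g1 : a %| g + 1 by rewrite dvdn_genusD r_last subnK ?dvdnn // (ltnW mult_gt1).
have mixed s t : [/\ a %| s, a <= s & s < g] -> g < t -> S t -> 2 * g + 1 <> s + t.
  move=> [dvd_s s_ge s_lt] t_gt St x_eq; have a_gt1 := mult_gt1; move: St.
  rewrite reflective_lt_2g; last by lia.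
  by rewrite (_ : t - g = g + 1 - s) ?dvdn_sub //; lia.
move=> s t s_gt0 t_gt0 Ss St.
case: (reflective_pos_cases Ss s_gt0) => [s_mult|s_gt];
  case: (reflective_pos_cases St t_gt0) => [t_mult|t_gt].
- by move: s_mult t_mult => [_ _ ?] [_ _ ?]; lia.
- exact: mixed.
- by rewrite (addnC s); apply: mixed.
- lia.
Qed.

Lemma atom_sub_mult x : atom S x -> x != a -> a < x /\ ~~ S (x - a).
Proof.
move=> [Sx x_gt0 x_atom] x_neq; have [a_gt0 Sa below_a] := S_mult.
have a_lt : a < x.
  by rewrite ltn_neqAle eq_sym x_neq leqNgt; apply: contraL Sx => x_lt; apply: below_a; lia.
split=> //; apply/negP => Sxa.
by apply: (x_atom a (x - a)) => //; lia.
Qed.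

(* Every atom other than a lies in the Apery set of a, which is
   {0} u ((g, g + a) minus {g + a - r}) u {2g + a - r}. *)
Lemma atom_reflective x : atom S x -> reflective_atoms g a r x.
Proof.
move=> x_atom; have [Sx x_gt0 x_irr] := x_atom.
rewrite /reflective_atoms; case: eqVneq => [//|x_neq] /=.
have [a_lt gap] := atom_sub_mult x_atom x_neq.
have := residue_lt; have := residue_gt0; have := residue_le_genus => r_le r_gt0 r_lt.
have [xa_lt | xa_ge] := ltnP (x - a) g.
  rewrite reflective_lt_g // in gap.
  have ndvd_x : ~~ (a %| x) by apply: contra gap => dvd_x; rewrite dvdn_subr // ltnW.
  have x_gt : g < x.
    by case: (reflective_pos_cases Sx x_gt0) => // [[dvd_x]]; rewrite dvd_x in ndvd_x.
  apply/orP; left; rewrite x_gt /=; apply/andP; split; first lia.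
  apply: contra gap => /eqP x_eq; rewrite x_eq (_ : g + a - r - a = g - r); last lia.
  exact: dvdn_genus_subr.
have xa_lt : x - a < 2 * g.
  by rewrite ltnNge; apply: contra gap; apply: reflective_ge_2g.
rewrite reflective_lt_2g ?negbK in gap; last lia.
have dvd_xg : a %| x - g by rewrite (_ : x - g = x - a - g + a) ?dvdn_add //; lia.
have x_ge : 2 * g <= x.
  by rewrite leqNgt; apply: contraL Sx => x_lt; rewrite reflective_lt_2g ?dvd_xg //; lia.
have {gap} x_eq : x = 2 * g + a - r.
  have /dvdn_eq_lt_double := dvdn_sub dvd_xg dvdn_genus_subr.
  by clear -x_ge xa_lt r_le r_gt0 r_lt; lia.
clear dvd_xg.
have := mult_gt1; have := mult_le_genus1 => a_le a_gt1.
apply/orP; right; case: (eqVneq r (a - 1)) => [r_last | r_neq] /=; first lia.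
exfalso; apply: (x_irr (g + 1) (g + a - r - 1)); try apply: reflective_window; lia.
Qed.

Lemma atomP x : atom S x <-> reflective_atoms g a r x.
Proof.
split; first exact: atom_reflective.
case/or3P=> [/eqP -> | /andP[x_bounds x_neq] | /andP[/eqP r_last /eqP ->]].
- exact: atom_mult.
- exact: atom_window.
- exact: atom_last.
Qed.

Lemma minimal_generating_set_reflective (A : pred nat) :
  minimal_generating_set S A <-> A =1 reflective_atoms g a r.
Proof.
rewrite minimal_generating_setP //; split=> [A_atoms x | A_eq x].
  by apply/idP/idP => [/A_atoms /atomP | /atomP /A_atoms].
by rewrite A_eq atomP.
Qed.

Lemma reflective_atoms_cases x : reflective_atoms g a r x =
  if r != a - 1 then (x == a) || ((g + 1 <= x <= g + (a - 1)) && (x != g + (a - r)))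
  else [|| x == a, x == 2 * g + 1 | g + 2 <= x <= g + (a - 1)].
Proof.
have := residue_lt; have := mult_gt1; have := mult_le_genus1 => a_le a_gt1 r_lt.
by rewrite /reflective_atoms; case: (eqVneq r (a - 1)) => r_last /=; apply/idP/idP; lia.
Qed.

Lemma card_reflective_atoms :
  card_is (reflective_atoms g a r) (if r != a - 1 then a - 1 else a).
Proof.
have := residue_lt; have := residue_gt0; have := mult_gt1; have := mult_le_genus1.
move=> a_le a_gt1 r_gt0 r_lt; have r_small := residue_small.
case: (eqVneq r (a - 1)) => [r_last | r_neq] /=.
- exists [:: a, 2 * g + 1 & iota (g + 2) (a - 2)]; split.
  + by rewrite /= !inE !mem_iota iota_uniq andbT; lia.
  + by move=> y; rewrite /reflective_atoms r_last eqxx !inE mem_iota /=; apply/idP/idP; lia.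
  + by rewrite /= size_iota; lia.
- exists (a :: iota (g + 1) (a - r - 1) ++ iota (g + a - r + 1) (r - 1)); split.
  + rewrite /= cat_uniq !iota_uniq mem_cat !mem_iota /= andbT.
    by apply/andP; split; [lia | apply/hasPn => y; rewrite !mem_iota; lia].
  + move=> y; rewrite /reflective_atoms (negbTE r_neq) inE mem_cat !mem_iota /=.
    by apply/idP/idP; lia.
  + by rewrite /= size_cat !size_iota; lia.
Qed.

End Reflective.

Theorem mainTheorem4 (S : pred nat) (g a r : nat) :
  numerical_semigroup S ->
  genus_is S g ->
  multiplicity_is S a ->
  reflective S g ->
  1 <= r <= a - 1 ->
  g %% a = r ->
  let X : pred nat :=
    if (g + 1) %% a != 0 then
      fun x => (x == a) || ((g + 1 <= x <= g + (a - 1)) && (x != g + (a - r)))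
    else
      fun x => [|| x == a, x == 2 * g + 1 | g + 2 <= x <= g + (a - 1)] in
  (forall A : pred nat, minimal_generating_set S A <-> A =1 X) /\
  (forall A : pred nat, minimal_generating_set S A ->
     card_is A (if (g + 1) %% a != 0 then a - 1 else a)).
Proof.
(* 1 <= r <= a - 1 is automatic: a does not divide g, which is a gap. *)
move=> S_ns S_genus S_mult S_refl _ g_mod X.
have mgsP := minimal_generating_set_reflective S_ns S_genus S_mult S_refl g_mod.
have last_residue := residue_last S_ns S_mult S_refl g_mod.
have X_atoms : X =1 reflective_atoms g a r.
  move=> x; rewrite (reflective_atoms_cases S_ns S_genus S_mult S_refl g_mod) /X last_residue.
  by case: (r != a - 1).
split=> [A | A /mgsP A_atoms]; first by rewrite mgsP; split=> A_eq x; rewrite A_eq X_atoms.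
rewrite last_residue; apply: card_is_eq A_atoms _.
exact: (card_reflective_atoms S_ns S_genus S_mult S_refl g_mod).
Qed.
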